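(* Let $d,h$ be positive integers, $W_{\mathrm{in}} \in \mathbb{R}^{h\times d}$, $b_{\mathrm{in}}\in\mathbb{R}^h$, $W_{\mathrm{out}}\in\mathbb{R}^{d\times h}$, $b_{\mathrm{out}}\in\mathbb{R}^d$, and consider the residual block $f(x) = x + r(x)$ with $r(x) = W_{\mathrm{out}}\,\mathrm{ReLU}(W_{\mathrm{in}}x + b_{\mathrm{in}}) + b_{\mathrm{out}}$, $x\in\mathbb{R}^d$. Let $x$ be a random vector in $\mathbb{R}^d$ drawn from a data distribution, and define the ReLU gating matrix $D(x) = \mathrm{diag}\big(\mathbf{1}[W_{\mathrm{in}}x + b_{\mathrm{in}} > 0]\big)\in\{0,1\}^{h\times h}$ (indicator taken entrywise), together with the Jacobians $J_r(x) = W_{\mathrm{out}}D(x)W_{\mathrm{in}}$ and $J_f(x) = I_d + J_r(x)$. Suppose that (i) the block satisfies dynamic isometry in expectation, $\mathbb{E}_x[J_f(x)^\top J_f(x)] = I_d$; (ii) the residual is non-trivial, i.e. $J_r(x)\neq 0$ (so that $\mathbb{E}_x[\|J_r(x)\|_F^2]>0$); and (iii) each ReLU unit is active with probability $\tfrac12$, i.e. $\mathbb{E}_x[D(x)] = \tfrac12 I_h$. Then $\mathrm{tr}(W_{\mathrm{out}}W_{\mathrm{in}}) < 0$.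
   Context: $\mathrm{ReLU}$ is applied entrywise, $\mathrm{ReLU}(t)=\max(t,0)$. $\|\cdot\|_F$ denotes the Frobenius norm and $\mathrm{tr}$ the trace. Expectations $\mathbb{E}_x$ are over the data distribution of $x$ (assumed such that the expectations exist). *)

From HB Require Import structures.
From mathcomp Require Import all_boot all_order all_algebra.
From mathcomp Require Import all_classical all_reals all_analysis.
Set Implicit Arguments. Unset Strict Implicit. Unset Printing Implicit Defensive.
Import Order.TTheory GRing.Theory Num.Theory.
Local Open Scope ring_scope.

Definition relu {R : realType} (t : R) : R := Num.max t 0.
Definition relu_vec {R : realType} {h : nat} (v : 'cV[R]_h) : 'cV[R]_h :=
  map_mx relu v.

Definition resid {R : realType} {d h : nat} (Win : 'M[R]_(h, d)) (bin : 'cV[R]_h)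
  (Wout : 'M[R]_(d, h)) (bout : 'cV[R]_d) (x : 'cV[R]_d) : 'cV[R]_d :=
  Wout *m relu_vec (Win *m x + bin) + bout.
Definition block {R : realType} {d h : nat} (Win : 'M[R]_(h, d)) (bin : 'cV[R]_h)
  (Wout : 'M[R]_(d, h)) (bout : 'cV[R]_d) (x : 'cV[R]_d) : 'cV[R]_d :=
  x + resid Win bin Wout bout x.

Definition gate {R : realType} {d h : nat} (Win : 'M[R]_(h, d)) (bin : 'cV[R]_h)
  (x : 'cV[R]_d) : 'M[R]_h :=
  diag_mx (\row_(i < h) (if 0 < (Win *m x + bin) i 0 then 1 else 0)).

Definition Jr {R : realType} {d h : nat} (Win : 'M[R]_(h, d)) (bin : 'cV[R]_h)
  (Wout : 'M[R]_(d, h)) (x : 'cV[R]_d) : 'M[R]_d :=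
  Wout *m gate Win bin x *m Win.
Definition Jf {R : realType} {d h : nat} (Win : 'M[R]_(h, d)) (bin : 'cV[R]_h)
  (Wout : 'M[R]_(d, h)) (x : 'cV[R]_d) : 'M[R]_d :=
  1%:M + Jr Win bin Wout x.

Definition frob2 {R : realType} {m n : nat} (A : 'M[R]_(m, n)) : R :=
  \sum_(i < m) \sum_(j < n) A i j ^+ 2.

Definition Emx {dT} {T : measurableType dT} {R : realType} (P : probability T R)
  {m n : nat} (M : T -> 'M[R]_(m, n)) : 'M[R]_(m, n) :=
  \matrix_(i, j) fine ('E_P[fun t => M t i j])%E.

From HB Require Import structures.
From mathcomp Require Import all_boot all_order all_algebra.
From mathcomp Require Import all_classical all_reals all_analysis.
From mathcomp Require Import ring lra.
Set Implicit Arguments. Unset Strict Implicit. Unset Printing Implicit Defensive.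
Import Order.TTheory GRing.Theory Num.Theory.
Local Open Scope classical_set_scope.
Local Open Scope ring_scope.

(** The Jacobians depend on the input only through the finitely many ReLU
  activation patterns, so every expectation in the hypotheses is a finite
  weighted sum over patterns.  Taking the trace of the isometry condition gives
  [d = d + 2 E[tr J_r] + E[|J_r|_F^2]], and by linearity of the trace
  [E[tr J_r] = tr (W_out E[D] W_in) = tr (W_out W_in) / 2].  Hence
  [tr (W_out W_in) = - E[|J_r|_F^2] < 0]. *)

Section FiniteValuedExpectation.
Context (R : realType) (dT : measure_display) (T : measurableType dT)
  (P : probability T R) (S : finType) (G : T -> S).
Hypothesis measurable_fiber : forall s, measurable (G @^-1` [set s]).

Definition fiber_mass (s : S) : R := fine (P (G @^-1` [set s])).

Lemma expectation_comp_finite (F : S -> R) :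
  ('E_P[fun t => F (G t)] = (\sum_s F s * fiber_mass s)%:E)%E.
Proof.
have indicator_sum t : ((F (G t))%:E = \sum_s (F s)%:E * (\1_(G @^-1` [set s]) t)%:E)%E.
  rewrite (bigD1 (G t)) //= big1 ?adde0 => [|s /negbTE Gt_neq_s].
    by rewrite indicE mem_set //= mule1.
  by rewrite indicE memNset ?mule0 // => /= Gts; rewrite Gts eqxx in Gt_neq_s.
rewrite unlock; under eq_integral do rewrite indicator_sum.
rewrite integral_sum // => [|s]; last exact/integrableZl/integrable_indic.
rewrite -sumEFin; apply: eq_bigr => s _.
rewrite integralZl //; last exact: integrable_indic.
by rewrite integral_indic // setIT EFinM fineK // fin_num_measure.
Qed.

Lemma sum_fiber_mass : \sum_s fiber_mass s = 1.
Proof.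
have := expectation_comp_finite (fun=> 1); rewrite expectation_cst => -[->].
by under eq_bigr do rewrite mul1r.
Qed.

Lemma Emx_comp_finite m n (F : S -> 'M[R]_(m, n)) :
  Emx P (fun t => F (G t)) = \sum_s fiber_mass s *: F s.
Proof.
apply/matrixP => i j; rewrite !mxE summxE (expectation_comp_finite (fun s => F s i j)) /=.
by apply: eq_bigr => s _; rewrite mxE mulrC.
Qed.

End FiniteValuedExpectation.

Lemma measurable_ffun_fiber (dT : measure_display) (T : measurableType dT)
    (K : finType) (G : T -> {ffun K -> bool}) :
  (forall k, measurable_fun setT (fun t => G t k)) ->
  forall s, measurable (G @^-1` [set s]).
Proof.
move=> measurable_G s.
have -> : G @^-1` [set s] = \bigcap_(k in setT) (setT `&` (G^~ k) @^-1` [set s k]).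
  apply/seteqP; split => [t /= <- k _ //|t /= Gt_s].
  by apply/ffunP => k; have [] := Gt_s k I.
by apply: fin_bigcap_measurable => [|k _]; [exact: finite_finset | exact: measurable_G].
Qed.

Lemma frob2_mxtrace (R : realType) m n (A : 'M[R]_(m, n)) : frob2 A = \tr (A^T *m A).
Proof.
rewrite /mxtrace /frob2 exchange_big /=; apply: eq_bigr => i _.
by rewrite mxE; apply: eq_bigr => l _; rewrite mxE expr2.
Qed.

Lemma mxtrace_gram_1D (R : realType) d (J : 'M[R]_d) :
  \tr ((1%:M + J)^T *m (1%:M + J)) = d%:R + 2 * \tr J + frob2 J.
Proof.
rewrite [(1%:M + J)^T]raddfD /= trmx1 mulmxDl mulmxDr !mulmxDr !mul1mx mulmx1 !mxtraceD.
by rewrite mxtrace1 mxtrace_tr frob2_mxtrace; ring.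
Qed.

Section AveragedResidualBlock.
Context (R : realType) (S : finType) (mu : S -> R) (d h : nat)
  (Win : 'M[R]_(h, d)) (Wout : 'M[R]_(d, h)) (D : S -> 'M[R]_h).

Let Jr s := Wout *m D s *m Win.

Lemma mxtrace_mul_lt0_of_isometry :
  \sum_s mu s = 1 ->
  \sum_s mu s *: D s = (1 / 2)%:M ->
  \sum_s mu s *: ((1%:M + Jr s)^T *m (1%:M + Jr s)) = 1%:M ->
  0 < \sum_s frob2 (Jr s) * mu s ->
  \tr (Wout *m Win) < 0.
Proof.
move=> mu_sum1 mean_D isometry frob_pos.
have mean_trace_Jr : \sum_s mu s * \tr (Jr s) = \tr (Wout *m Win) / 2.
  rewrite /Jr; under eq_bigr do rewrite -mxtraceZ scalemxAl scalemxAr.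
  rewrite -raddf_sum /= -mulmx_suml -mulmx_sumr mean_D mul_mx_scalar.
  by rewrite -scalemxAl mxtraceZ mulrC mul1r.
have := congr1 mxtrace isometry.
rewrite raddf_sum mxtrace1 /=; under eq_bigr do rewrite mxtraceZ mxtrace_gram_1D !mulrDr.
rewrite !big_split /= -mulr_suml mu_sum1 mul1r.
under [X in _ + X + _]eq_bigr do rewrite mulrCA.
rewrite -mulr_sumr mean_trace_Jr.
under [X in _ + X = _]eq_bigr do rewrite mulrC.
lra.
Qed.

End AveragedResidualBlock.

Definition pattern_mx {R : pzRingType} {h : nat} (s : {ffun 'I_h -> bool}) : 'M[R]_h :=
  diag_mx (\row_k (s k)%:R).

Section GatePattern.
Context (R : realType) (dT : measure_display) (T : measurableType dT) (d h : nat)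
  (Win : 'M[R]_(h, d)) (bin : 'cV[R]_h) (X : T -> 'cV[R]_d).

Definition gate_pattern (t : T) : {ffun 'I_h -> bool} :=
  [ffun k => 0 < (Win *m X t + bin) k 0].

Lemma gate_patternE t : gate Win bin (X t) = pattern_mx (gate_pattern t).
Proof.
rewrite /gate /pattern_mx; congr diag_mx; apply/rowP => k.
by rewrite [LHS]mxE [RHS]mxE ffunE; case: ifP.
Qed.

Hypothesis X_meas : forall i : 'I_d, measurable_fun setT (fun t => X t i 0).

Lemma measurable_preactivation k :
  measurable_fun setT (fun t => (Win *m X t + bin) k 0).
Proof.
under eq_fun do rewrite !mxE -big_enum.
apply: measurable_realfun.measurable_funD => //.
by apply: measurable_sum => j; exact: measurable_realfun.measurable_funM.
Qed.

Lemma measurable_gate_pattern_fiber s : measurable (gate_pattern @^-1` [set s]).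
Proof.
apply: measurable_ffun_fiber => k; under eq_fun do rewrite ffunE.
exact: measurable_realfun.measurable_fun_ltr (measurable_preactivation k).
Qed.

End GatePattern.

Theorem proposition1 (R : realType) (dT : measure_display) (T : measurableType dT)
  (P : probability T R) (d h : nat) (hd : (0 < d)%N) (hh : (0 < h)%N)
  (Win : 'M[R]_(h, d)) (bin : 'cV[R]_h) (Wout : 'M[R]_(d, h)) (bout : 'cV[R]_d)
  (X : T -> 'cV[R]_d)
  (X_meas : forall i : 'I_d, measurable_fun setT (fun t => X t i 0))
  (iso : Emx P (fun t => (Jf Win bin Wout (X t))^T *m Jf Win bin Wout (X t)) = 1%:M)
  (nontriv : (0 < 'E_P[fun t => frob2 (Jr Win bin Wout (X t))])%E)
  (half : Emx P (fun t => gate Win bin (X t)) = (1 / 2 : R)%:M) :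
  \tr (Wout *m Win) < 0.
Proof.
pose G := gate_pattern Win bin X.
have measurable_G := measurable_gate_pattern_fiber Win bin X_meas.
have JrE t : Jr Win bin Wout (X t) = Wout *m pattern_mx (G t) *m Win.
  by rewrite /Jr gate_patternE.
apply: (mxtrace_mul_lt0_of_isometry (mu := fiber_mass P G) (D := pattern_mx)).
- exact: sum_fiber_mass.
- rewrite -(Emx_comp_finite _ measurable_G) -[RHS]half.
  by congr Emx; apply: funext => t; rewrite gate_patternE.
- rewrite -(Emx_comp_finite _ measurable_G) -[RHS]iso.
  by congr Emx; apply: funext => t; rewrite /Jf JrE.
- move: nontriv; under eq_fun do rewrite JrE.
  rewrite (expectation_comp_finite P measurable_G
    (fun s => frob2 (Wout *m pattern_mx s *m Win))) lte_fin.
  exact: id.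
Qed.
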